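(* Assume the capacities satisfy (C1)–(C3), with limiting sequence $\{g_n\}_{n\ge0}$ from (C2). Then there exists $\alpha>0$ such that $$\sum_{n=0}^\infty n\,\big|g^{(N)}_n-g_n\big|=O(N^{-\alpha}).$$
   Context: Capacities $\lambda_1,\dots,\lambda_N>0$ deterministic; $\mu_N=\frac1N\sum_i\lambda_i$, $\nu_N=\sum_i\lambda_i^2/\sum_i\lambda_i$, $f^{(N)}_n=\frac1N\sum_i e^{-\lambda_i}\frac{\lambda_i^n}{n!}$, $g^{(N)}_n=\frac{1}{N\mu_N}\sum_i e^{-\lambda_i}\frac{\lambda_i^{n+1}}{n!}$ ($n\ge0$); $d_{TV}(p,q)=\frac12\sum_j|p_j-q_j|$. (C1): there are $\mu\in(0,\infty)$, $\nu\in(1,\infty)$, $\alpha_1>0$ with $|\mu_N-\mu|,|\nu_N-\nu|=O(N^{-\alpha_1})$. (C2): there are sequences $\{f_n\}$, $\{g_n\}$ independent of $N$ and $\alpha_2>0$ with $d_{TV}(f^{(N)},f)=O(N^{-\alpha_2})$, $d_{TV}(g^{(N)},g)=O(N^{-\alpha_2})$. (C3): there is $\tau>3$ such that for every $\varepsilon>0$ (with $\gamma:=\frac1{\tau-1}+\varepsilon<\frac12$), $\limsup_N\frac1N\sum_i\lambda_i^{\tau-1-\varepsilon}<\infty$ and $\max_i\lambda_i\le N^\gamma$. *)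

From Stdlib Require Import Reals Lra List.
From Coquelicot Require Import Coquelicot.
Open Scope R_scope.

Definition sumN (N : nat) (f : nat -> R) : R :=
  fold_right Rplus 0 (map f (List.seq 0 N)).

(* Capacities: lam N i is lambda_i for the system of size N (i < N). *)
Definition muN (lam : nat -> nat -> R) (N : nat) : R :=
  sumN N (fun i => lam N i) / INR N.

Definition nuN (lam : nat -> nat -> R) (N : nat) : R :=
  sumN N (fun i => lam N i ^ 2) / sumN N (fun i => lam N i).

Definition fN (lam : nat -> nat -> R) (N n : nat) : R :=
  sumN N (fun i => exp (- lam N i) * lam N i ^ n / INR (Factorial.fact n)) / INR N.

Definition gN (lam : nat -> nat -> R) (N n : nat) : R :=
  sumN N (fun i => exp (- lam N i) * lam N i ^ (S n) / INR (Factorial.fact n))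
    / (INR N * muN lam N).

Definition bigO_pow (x : nat -> R) (a : R) : Prop :=
  exists C : R, exists N0 : nat, forall N : nat, (N0 <= N)%nat ->
    Rabs (x N) <= C * Rpower (INR N) (- a).

Definition dTV_bigO (p : nat -> nat -> R) (q : nat -> R) (a : R) : Prop :=
  exists C : R, exists N0 : nat, forall N : nat, (N0 <= N)%nat ->
    ex_series (fun j => Rabs (p N j - q j)) /\
    / 2 * Series (fun j => Rabs (p N j - q j)) <= C * Rpower (INR N) (- a).

Definition cond_C1 (lam : nat -> nat -> R) (mu nu a1 : R) : Prop :=
  0 < mu /\ 1 < nu /\ 0 < a1 /\
  bigO_pow (fun N => muN lam N - mu) a1 /\
  bigO_pow (fun N => nuN lam N - nu) a1.

Definition cond_C2 (lam : nat -> nat -> R) (f g : nat -> R) (a2 : R) : Prop :=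
  0 < a2 /\ dTV_bigO (fN lam) f a2 /\ dTV_bigO (gN lam) g a2.

Definition cond_C3 (lam : nat -> nat -> R) : Prop :=
  exists tau : R, 3 < tau /\
    forall eps : R, 0 < eps -> / (tau - 1) + eps < / 2 ->
      Rbar_lt (LimSup_seq (fun N => sumN N (fun i => Rpower (lam N i) (tau - 1 - eps)) / INR N))
              p_infty /\
      (forall N i : nat, (i < N)%nat -> lam N i <= Rpower (INR N) (/ (tau - 1) + eps)).

From Stdlib Require Import Reals Lra Lia List.
From Coquelicot Require Import Coquelicot.
Open Scope R_scope.

(* The law g^(N) is the mixture of the Poisson laws Poi(lambda_i) with weights proportional
   to lambda_i.  Cut the series at K = N^(a2/2).  Below K,
   n |g^(N)_n - g_n| <= K |g^(N)_n - g_n|, and (C2) makes the sum O(N^(a2/2 - a2)).  Above K,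
   bound the moments of g^(N) and g separately.  For one capacity lambda, the tail
   sum_(n > K) n lambda Poi(lambda)(n) is at most lambda^2 <= L^(2-q) lambda^q when lambda > L,
   and at most (lambda + 1) lambda^2 / K when lambda <= L.  Averaging over i with (C1) and the
   q-th moment bound from (C3) (q = tau - 1 - eps > 2) gives a tail O(L^(2-q) + L / K), and
   L = N^(a2/4) makes it a negative power of N.  The tail of g satisfies the same bound
   because g is the l^1 limit of g^(N). *)

Lemma fold_right_Rplus_acc (l : list R) (a : R) :
  fold_right Rplus a l = fold_right Rplus 0 l + a.
Proof. induction l as [|x l IH]; simpl; [ring | rewrite IH; ring]. Qed.

Lemma sumN_S (N : nat) (f : nat -> R) : sumN (S N) f = sumN N f + f N.
Proof.
  unfold sumN. rewrite seq_S, map_app, fold_right_app; simpl.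
  rewrite fold_right_Rplus_acc; ring.
Qed.

Lemma sumN_sum_f_R0 (N : nat) (f : nat -> R) : sumN (S N) f = sum_f_R0 f N.
Proof.
  induction N as [|N IH].
  - unfold sumN; simpl; ring.
  - rewrite sumN_S, IH; reflexivity.
Qed.

Lemma sum_f_R0_pos (a : nat -> R) (N : nat) :
  (forall n, (n <= N)%nat -> 0 < a n) -> 0 < sum_f_R0 a N.
Proof.
  induction N as [|N IH]; intros Ha; simpl.
  - apply Ha; lia.
  - assert (0 < a (S N)) by (apply Ha; lia).
    assert (0 < sum_f_R0 a N) by (apply IH; intros; apply Ha; lia).
    lra.
Qed.

Lemma sum_f_R0_switch (u : nat -> nat -> R) (m n : nat) :
  sum_f_R0 (fun i => sum_f_R0 (u i) n) m = sum_f_R0 (fun j => sum_f_R0 (fun i => u i j) m) n.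
Proof.
  rewrite <- !sum_n_Reals.
  rewrite (sum_n_ext _ (fun i => sum_n (u i) n)) by (intro; symmetry; apply sum_n_Reals).
  rewrite sum_n_switch.
  apply sum_n_ext; intro; apply sum_n_Reals.
Qed.

Lemma sum_f_R0_le_Series (a : nat -> R) (P : nat) :
  (forall n, 0 <= a n) -> ex_series a -> sum_f_R0 a P <= Series a.
Proof.
  intros Ha Hex. apply sum_incr; [|exact Ha].
  apply is_series_Reals, Series_correct, Hex.
Qed.

Lemma ex_series_bounded_partial_sums (a : nat -> R) (M : R) :
  (forall n, 0 <= a n) -> (forall P, sum_f_R0 a P <= M) -> ex_series a /\ Series a <= M.
Proof.
  intros Ha HM.
  assert (Hgrow : Un_growing (sum_f_R0 a)) by (intro n; rewrite tech5; specialize (Ha (S n)); lra).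
  destruct (growing_cv _ Hgrow) as [l Hl].
  { exists M; intros x [n ->]; apply HM. }
  assert (Hs : is_series a l) by (apply is_series_Reals; exact Hl).
  split; [exists l; exact Hs|].
  rewrite (is_series_unique a l Hs).
  apply (is_lim_seq_le (sum_f_R0 a) (fun _ => M) l M HM).
  - apply is_lim_seq_Reals, Hl.
  - apply is_lim_seq_const.
Qed.

Lemma is_lim_seq_Rpower_INR_opp (a : R) :
  0 < a -> is_lim_seq (fun N => Rpower (INR N) (- a)) 0.
Proof.
  intros Ha. unfold Rpower.
  apply (is_lim_comp_seq exp (fun N => - a * ln (INR N)) m_infty 0 is_lim_exp_m).
  - exists 0%nat; intros; discriminate.
  - assert (Hm : Rbar_mult (- a) p_infty = m_infty).
    { simpl. destruct (Rle_dec 0 (- a)); [exfalso; lra | reflexivity]. }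
    rewrite <- Hm. apply is_lim_seq_scal_l.
    apply (is_lim_comp_seq ln INR p_infty p_infty is_lim_ln_p).
    + exists 0%nat; intros; discriminate.
    + apply is_lim_seq_INR.
Qed.

Lemma eventually_mul_Rpower_INR_opp_le (C a e : R) :
  0 < a -> 0 < e -> eventually (fun N => C * Rpower (INR N) (- a) <= e).
Proof.
  intros Ha He.
  assert (Hlim := is_lim_seq_scal_l _ C _ (is_lim_seq_Rpower_INR_opp a Ha)).
  rewrite Rbar_mult_0_r in Hlim.
  apply is_lim_seq_spec in Hlim.
  eapply filter_imp; [|exact (Hlim (mkposreal e He))]; simpl; intros N HN.
  rewrite Rminus_0_r in HN. pose proof (Rle_abs (C * Rpower (INR N) (- a))). lra.
Qed.

Lemma bigO_pow_eventually_small (x : nat -> R) (a e : R) :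
  0 < a -> 0 < e -> bigO_pow x a -> eventually (fun N => Rabs (x N) <= e).
Proof.
  intros Ha He [C [N0 HC]].
  apply (filter_imp (fun N =>
    Rabs (x N) <= C * Rpower (INR N) (- a) /\ C * Rpower (INR N) (- a) <= e)).
  { intros N [H1 H2]. lra. }
  apply filter_and; [exists N0; exact HC|].
  apply eventually_mul_Rpower_INR_opp_le; assumption.
Qed.

Lemma LimSup_seq_lt_p_infty_eventually_le (u : nat -> R) :
  Rbar_lt (LimSup_seq u) p_infty -> exists B, eventually (fun N => u N <= B).
Proof.
  unfold LimSup_seq. destruct (ex_LimSup_seq u) as [[l| |] Hl]; simpl; intros Hlt.
  - destruct (Hl (mkposreal 1 Rlt_0_1)) as [_ [N HN]].
    exists (l + 1), N. intros n Hn. apply Rlt_le, HN, Hn.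
  - contradiction.
  - destruct (Hl 0) as [N HN]. exists 0, N. intros n Hn. apply Rlt_le, HN, Hn.
Qed.

Lemma cond_C1_eventually (lam : nat -> nat -> R) (mu nu a1 : R) :
  cond_C1 lam mu nu a1 -> eventually (fun N => mu / 2 <= muN lam N /\ nuN lam N <= nu + 1).
Proof.
  intros [Hmu [_ [Ha1 [HmuN HnuN]]]]. apply filter_and.
  - apply (filter_imp (fun N => Rabs (muN lam N - mu) <= mu / 2)).
    + intros N HN. rewrite Rabs_minus_sym in HN. pose proof (Rle_abs (mu - muN lam N)). lra.
    + apply (bigO_pow_eventually_small _ a1); [exact Ha1 | lra | exact HmuN].
  - apply (filter_imp (fun N => Rabs (nuN lam N - nu) <= 1)).
    + intros N HN. pose proof (Rle_abs (nuN lam N - nu)). lra.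
    + apply (bigO_pow_eventually_small _ a1); [exact Ha1 | lra | exact HnuN].
Qed.

Lemma cond_C3_moment_bound (lam : nat -> nat -> R) :
  cond_C3 lam ->
  exists q B, 2 < q /\ 0 <= B /\
    eventually (fun N => sumN N (fun i => Rpower (lam N i) q) / INR N <= B).
Proof.
  intros [tau [Htau HC3]].
  assert (Ht : 0 < / (tau - 1) < / 2)
    by (split; [apply Rinv_0_lt_compat | apply Rinv_lt_contravar]; lra).
  assert (Htt : / (tau - 1) * (tau - 1) = 1) by (field; lra).
  destruct (HC3 ((/ 2 - / (tau - 1)) / 2)) as [Hlimsup _]; [lra | lra|].
  destruct (LimSup_seq_lt_p_infty_eventually_le _ Hlimsup) as [B HB].
  exists (tau - 1 - (/ 2 - / (tau - 1)) / 2), (Rabs B).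
  split; [nra | split; [apply Rabs_pos|]].
  apply (filter_imp _ _ (fun N HN => Rle_trans _ _ _ HN (Rle_abs B)) HB).
Qed.

Lemma dTV_bigO_eventually (p : nat -> nat -> R) (q : nat -> R) (a : R) :
  dTV_bigO p q a ->
  exists C, eventually (fun N => ex_series (fun n => Rabs (p N n - q n)) /\
    Series (fun n => Rabs (p N n - q n)) <= C * Rpower (INR N) (- a)).
Proof.
  intros [C [N0 H]]. exists (2 * C), N0. intros N HN.
  destruct (H N HN) as [Hex Hser]. split; [exact Hex | lra].
Qed.

(** * Poisson moments and tail moments *)

Definition poisson (l : R) (n : nat) : R := exp (- l) * l ^ n / INR (Factorial.fact n).

Lemma poisson_pos (l : R) (n : nat) : 0 < l -> 0 < poisson l n.
Proof.
  intros Hl. unfold poisson. apply Rdiv_lt_0_compat; [|apply INR_fact_lt_0].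
  apply Rmult_lt_0_compat; [apply exp_pos | apply pow_lt, Hl].
Qed.

Lemma INR_S_mul_poisson_S (l : R) (n : nat) : INR (S n) * poisson l (S n) = l * poisson l n.
Proof.
  unfold poisson. rewrite fact_simpl, mult_INR. simpl pow.
  assert (INR (Factorial.fact n) <> 0) by apply INR_fact_neq_0.
  assert (INR (S n) <> 0) by (apply not_0_INR; lia).
  field; split; assumption.
Qed.

Lemma sum_poisson_le1 (l : R) (P : nat) : 0 <= l -> sum_f_R0 (poisson l) P <= 1.
Proof.
  intros Hl.
  rewrite (sum_eq _ (fun k => l ^ k / INR (Factorial.fact k) * exp (- l)))
    by (intros; unfold poisson; field; apply INR_fact_neq_0).
  rewrite <- scal_sum, exp_Ropp.
  apply Rmult_le_reg_l with (exp l); [apply exp_pos|].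
  rewrite <- Rmult_assoc, Rinv_r, Rmult_1_l, Rmult_1_r by apply Rgt_not_eq, exp_pos.
  apply exp_ge_taylor, Hl.
Qed.

Lemma sum_INR_mul_poisson (l : R) (F : nat -> R) (P : nat) :
  sum_f_R0 (fun n => INR n * poisson l n * F n) (S P)
  = l * sum_f_R0 (fun n => poisson l n * F (S n)) P.
Proof.
  rewrite decomp_sum by lia. simpl pred. rewrite Rmult_0_l, Rmult_0_l, Rplus_0_l, scal_sum.
  apply sum_eq; intros n _. rewrite INR_S_mul_poisson_S. ring.
Qed.

Lemma poisson_moment1_le (l : R) (P : nat) :
  0 <= l -> sum_f_R0 (fun n => INR n * poisson l n) P <= l.
Proof.
  intros Hl. destruct P as [|P]; [simpl; lra|].
  rewrite (sum_eq _ (fun n => INR n * poisson l n * 1)) by (intros; ring).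
  rewrite sum_INR_mul_poisson, (sum_eq _ (poisson l)) by (intros; ring).
  pose proof (sum_poisson_le1 l P Hl). nra.
Qed.

Lemma poisson_moment2_le (l : R) (P : nat) :
  0 <= l -> sum_f_R0 (fun n => INR n ^ 2 * poisson l n) P <= l * (l + 1).
Proof.
  intros Hl. destruct P as [|P]; [simpl; nra|].
  rewrite (sum_eq _ (fun n => INR n * poisson l n * INR n)) by (intros; ring).
  rewrite sum_INR_mul_poisson.
  rewrite (sum_eq _ (fun n => INR n * poisson l n + poisson l n)) by (intros; rewrite S_INR; ring).
  rewrite plus_sum.
  pose proof (poisson_moment1_le l P Hl). pose proof (sum_poisson_le1 l P Hl). nra.
Qed.

Lemma pow2_le_Rpower (L l q : R) :
  0 < L -> L < l -> 2 < q -> l ^ 2 <= Rpower L (2 - q) * Rpower l q.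
Proof.
  intros HL Hl Hq.
  replace (l ^ 2) with (Rpower l (2 - q) * Rpower l q)
    by (rewrite <- Rpower_plus, <- (Rpower_pow 2 l) by lra; f_equal; simpl; ring).
  apply Rmult_le_compat_r; [apply Rlt_le, exp_pos|].
  unfold Rpower. apply Rlt_le, exp_increasing.
  assert (ln L < ln l) by (apply ln_increasing; lra).
  nra.
Qed.

Definition tail_moment (K : R) (x : nat -> R) (P : nat) : R :=
  sum_f_R0 (fun n => if Rlt_dec K (INR n) then INR n * Rabs (x n) else 0) P.

Lemma poisson_size_biased_tail_moment_le (l K L q : R) (P : nat) :
  0 < l -> 0 < K -> 0 < L -> 2 < q ->
  tail_moment K (fun n => l * poisson l n) P
  <= Rpower L (2 - q) * Rpower l q + (L + 1) / K * l ^ 2.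
Proof.
  intros Hl HK HL Hq.
  assert (Habs : forall n, Rabs (l * poisson l n) = l * poisson l n)
    by (intro; apply Rabs_pos_eq, Rmult_le_pos; [lra | apply Rlt_le, poisson_pos, Hl]).
  assert (Hfar : 0 <= Rpower L (2 - q) * Rpower l q)
    by (apply Rlt_le, Rmult_lt_0_compat; apply exp_pos).
  assert (Hnear : 0 <= (L + 1) / K * l ^ 2)
    by (apply Rmult_le_pos; [apply Rlt_le, Rdiv_lt_0_compat | apply pow2_ge_0]; lra).
  unfold tail_moment.
  destruct (Rlt_dec L l) as [HLl | HlL].
  - apply Rle_trans with (l * sum_f_R0 (fun n => INR n * poisson l n) P).
    + rewrite scal_sum. apply sum_Rle; intros n _. rewrite Habs.
      pose proof (poisson_pos l n Hl). pose proof (pos_INR n).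
      destruct Rlt_dec; [right; ring | apply Rmult_le_pos; [apply Rmult_le_pos|]; lra].
    + pose proof (poisson_moment1_le l P (Rlt_le _ _ Hl)).
      pose proof (pow2_le_Rpower L l q HL HLl Hq). nra.
  -     apply Rle_trans with (l / K * sum_f_R0 (fun n => INR n ^ 2 * poisson l n) P).
    + rewrite scal_sum. apply sum_Rle; intros n _. rewrite Habs.
      pose proof (poisson_pos l n Hl). pose proof (pos_INR n).
      destruct Rlt_dec as [Hn|Hn].
      * replace (INR n ^ 2 * poisson l n * (l / K))
          with (INR n * (l * poisson l n) * (INR n / K)) by (field; lra).
        rewrite <- (Rmult_1_r (INR n * (l * poisson l n))) at 1.
        apply Rmult_le_compat_l; [apply Rmult_le_pos; [|apply Rmult_le_pos]; lra|].
        apply Rmult_le_reg_r with K; [lra|]. unfold Rdiv. rewrite Rmult_assoc, Rinv_l; lra.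
      * apply Rmult_le_pos; [apply Rmult_le_pos; [apply pow2_ge_0 | lra] |].
        apply Rlt_le, Rdiv_lt_0_compat; lra.
    + pose proof (poisson_moment2_le l P (Rlt_le _ _ Hl)).
      apply Rle_trans with ((L + 1) / K * l ^ 2); [|lra].
      replace ((L + 1) / K * l ^ 2) with (l / K * (l * (L + 1))) by (field; lra).
      apply Rmult_le_compat_l; [apply Rlt_le, Rdiv_lt_0_compat; lra|].
      apply Rle_trans with (l * (l + 1)); [lra | apply Rmult_le_compat_l; lra].
Qed.

Lemma sum_INR_mul_abs_sub_le (x y : nat -> R) (K : R) (P : nat) :
  0 <= K ->
  sum_f_R0 (fun n => INR n * Rabs (x n - y n)) P
  <= K * sum_f_R0 (fun n => Rabs (x n - y n)) P + tail_moment K x P + tail_moment K y P.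
Proof.
  intros HK. unfold tail_moment. rewrite scal_sum, <- !plus_sum.
  apply sum_Rle; intros n _.
  pose proof (Rabs_pos (x n - y n)). pose proof (pos_INR n).
  destruct Rlt_dec as [Hn|Hn].
  - assert (Rabs (x n - y n) <= Rabs (x n) + Rabs (y n))
      by (unfold Rminus; rewrite <- (Rabs_Ropp (y n)); apply Rabs_triang).
    nra.
  - nra.
Qed.

Lemma tail_moment_le_shift (x y : nat -> R) (K : R) (P : nat) :
  tail_moment K y P <= tail_moment K x P + INR P * sum_f_R0 (fun n => Rabs (x n - y n)) P.
Proof.
  unfold tail_moment. rewrite scal_sum, <- plus_sum.
  apply sum_Rle; intros n Hn.
  pose proof (Rabs_pos (x n - y n)). pose proof (pos_INR n). pose proof (le_INR _ _ Hn).
  assert (Rabs (y n) <= Rabs (x n) + Rabs (x n - y n))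
    by (rewrite <- (Rabs_Ropp (x n - y n));
        replace (y n) with (x n + - (x n - y n)) at 1 by ring; apply Rabs_triang).
  destruct Rlt_dec; nra.
Qed.

Lemma tail_moment_le_of_approx (y : nat -> R) (K T : R) :
  (forall e, 0 < e -> exists x, (forall P, tail_moment K x P <= T) /\
     ex_series (fun n => Rabs (x n - y n)) /\ Series (fun n => Rabs (x n - y n)) <= e) ->
  forall P, tail_moment K y P <= T.
Proof.
  intros Happrox P. apply le_epsilon; intros e He.
  assert (HP : 0 < INR P + 1) by (pose proof (pos_INR P); lra).
  destruct (Happrox (e / (INR P + 1))) as [x [Hx [Hex Hs]]]; [apply Rdiv_lt_0_compat; lra|].
  pose proof (tail_moment_le_shift x y K P) as Hshift.
  pose proof (sum_f_R0_le_Series _ P (fun n => Rabs_pos _) Hex) as Hpartial.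
  assert (INR P * (e / (INR P + 1)) <= e).
  { apply Rle_trans with ((INR P + 1) * (e / (INR P + 1))); [|right; field; lra].
    apply Rmult_le_compat_r; [apply Rlt_le, Rdiv_lt_0_compat|]; lra. }
  pose proof (Hx P). pose proof (pos_INR P). nra.
Qed.

Lemma weighted_abs_sub_Series_le (x y : nat -> R) (K D T : R) :
  0 <= K -> ex_series (fun n => Rabs (x n - y n)) -> Series (fun n => Rabs (x n - y n)) <= D ->
  (forall P, tail_moment K x P <= T) -> (forall P, tail_moment K y P <= T) ->
  ex_series (fun n => INR n * Rabs (x n - y n)) /\
  Series (fun n => INR n * Rabs (x n - y n)) <= K * D + 2 * T.
Proof.
  intros HK Hex HD Hx Hy.
  apply ex_series_bounded_partial_sums.
  { intro n; apply Rmult_le_pos; [apply pos_INR | apply Rabs_pos]. }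
  intros P.
  pose proof (sum_INR_mul_abs_sub_le x y K P HK).
  pose proof (sum_f_R0_le_Series _ P (fun n => Rabs_pos _) Hex).
  pose proof (Hx P). pose proof (Hy P). nra.
Qed.

(** * The size-biased law g^(N) *)

Lemma gN_size_biased_mixture (lam : nat -> nat -> R) (N n : nat) :
  gN lam (S N) n
  = sum_f_R0 (fun i => lam (S N) i * poisson (lam (S N) i) n) N / sum_f_R0 (fun i => lam (S N) i) N.
Proof.
  unfold gN, muN. rewrite !sumN_sum_f_R0.
  replace (INR (S N) * (sum_f_R0 (fun i => lam (S N) i) N / INR (S N)))
    with (sum_f_R0 (fun i => lam (S N) i) N) by (field; apply not_0_INR; lia).
  f_equal. apply sum_eq; intros i _. unfold poisson. simpl pow. field. apply INR_fact_neq_0.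
Qed.

Lemma tail_moment_gN (lam : nat -> nat -> R) (N : nat) (K : R) (P : nat) :
  (forall i, (i <= N)%nat -> 0 < lam (S N) i) ->
  tail_moment K (gN lam (S N)) P
  = sum_f_R0 (fun i => tail_moment K (fun n => lam (S N) i * poisson (lam (S N) i) n) P) N
    / sum_f_R0 (fun i => lam (S N) i) N.
Proof.
  intros Hpos.
  assert (Hw : forall i n, (i <= N)%nat -> 0 < lam (S N) i * poisson (lam (S N) i) n)
    by (intros i n Hi; apply Rmult_lt_0_compat; [|apply poisson_pos]; apply Hpos, Hi).
  unfold tail_moment. rewrite sum_f_R0_switch.
  unfold Rdiv. rewrite Rmult_comm, scal_sum.
  apply sum_eq; intros n _. destruct Rlt_dec.
  - rewrite (sum_eq _ (fun i => lam (S N) i * poisson (lam (S N) i) n * INR n))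
      by (intros i Hi; rewrite Rabs_pos_eq by (apply Rlt_le, Hw, Hi); ring).
    rewrite <- scal_sum, gN_size_biased_mixture, Rabs_pos_eq; [unfold Rdiv; ring|].
    apply Rlt_le, Rdiv_lt_0_compat; apply sum_f_R0_pos; [intros; apply Hw | apply Hpos]; assumption.
  - rewrite sum_cte. ring.
Qed.

Lemma gN_tail_moment_le (lam : nat -> nat -> R) (N : nat) (K L q : R) (P : nat) :
  (0 < N)%nat -> (forall i, (i < N)%nat -> 0 < lam N i) -> 0 < K -> 0 < L -> 2 < q ->
  tail_moment K (gN lam N) P
  <= Rpower L (2 - q) * (sumN N (fun i => Rpower (lam N i) q) / INR N / muN lam N)
     + (L + 1) / K * nuN lam N.
Proof.
  intros HN Hpos HK HL Hq. destruct N as [|N]; [lia|].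
  assert (Hpos' : forall i, (i <= N)%nat -> 0 < lam (S N) i) by (intros; apply Hpos; lia).
  assert (HS : 0 < sum_f_R0 (fun i => lam (S N) i) N) by (apply sum_f_R0_pos, Hpos').
  rewrite tail_moment_gN by exact Hpos'.
  apply Rle_trans with
    (sum_f_R0 (fun i => Rpower (lam (S N) i) q * Rpower L (2 - q)
                        + lam (S N) i ^ 2 * ((L + 1) / K)) N
     / sum_f_R0 (fun i => lam (S N) i) N).
  - apply Rmult_le_compat_r; [apply Rlt_le, Rinv_0_lt_compat, HS|].
    apply sum_Rle; intros i Hi. rewrite Rmult_comm, (Rmult_comm (lam (S N) i ^ 2)).
    apply poisson_size_biased_tail_moment_le; auto.
  - right. unfold muN, nuN. rewrite !sumN_sum_f_R0, plus_sum, <- !scal_sum.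
    field. repeat split; [lra | lra | apply not_0_INR; lia].
Qed.

Lemma Rpower_split_scales_le (x a q alpha : R) :
  1 <= x -> 0 < a -> alpha <= a / 4 -> alpha <= (q - 2) * a / 4 ->
  Rpower x (a / 2) * Rpower x (- a) <= Rpower x (- alpha) /\
  Rpower (Rpower x (a / 4)) (2 - q) <= Rpower x (- alpha) /\
  (Rpower x (a / 4) + 1) / Rpower x (a / 2) <= 2 * Rpower x (- alpha).
Proof.
  intros Hx Ha H1 H2.
  assert (Hle : forall e, e <= - alpha -> Rpower x e <= Rpower x (- alpha))
    by (intros e He; apply Rle_Rpower; assumption).
  repeat split.
  - rewrite <- Rpower_plus. apply Hle; lra.
  - rewrite Rpower_mult. apply Hle; nra.
  - replace ((Rpower x (a / 4) + 1) / Rpower x (a / 2))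
      with (Rpower x (a / 4 + - (a / 2)) + Rpower x (- (a / 2)))
      by (rewrite Rpower_plus, !Rpower_Ropp; field; apply Rgt_not_eq, exp_pos).
    pose proof (Hle (a / 4 + - (a / 2))). pose proof (Hle (- (a / 2))). lra.
Qed.

Section WeightedRate.

Variable lam : nat -> nat -> R.
Hypothesis Hpos : forall N i : nat, (i < N)%nat -> 0 < lam N i.
Variables mu_lo nu_hi q B : R.
Hypotheses (Hmu_lo : 0 < mu_lo) (Hnu_hi : 0 <= nu_hi) (Hq : 2 < q) (HB : 0 <= B).
Hypothesis Hmunu : eventually (fun N => mu_lo <= muN lam N /\ nuN lam N <= nu_hi).
Hypothesis Hmoment : eventually (fun N => sumN N (fun i => Rpower (lam N i) q) / INR N <= B).

Definition tail_bound (K L : R) : R := Rpower L (2 - q) * (B / mu_lo) + (L + 1) / K * nu_hi.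

Lemma gN_tail_moment_eventually_le :
  eventually (fun N => forall K L P, 0 < K -> 0 < L ->
    tail_moment K (gN lam N) P <= tail_bound K L).
Proof.
  apply (filter_imp (fun N => (1 <= N)%nat /\ (mu_lo <= muN lam N /\ nuN lam N <= nu_hi) /\
                              sumN N (fun i => Rpower (lam N i) q) / INR N <= B)).
  2: { apply filter_and; [exists 1%nat; auto | apply filter_and; [exact Hmunu | exact Hmoment]]. }
  intros N [HN [[HmuN HnuN] HqN]] K L P HK HL.
  eapply Rle_trans; [apply (gN_tail_moment_le lam N K L q P); auto|].
  unfold tail_bound. apply Rplus_le_compat.
  - apply Rmult_le_compat_l; [apply Rlt_le, exp_pos|].
    apply Rle_trans with (B / muN lam N).
    + apply Rmult_le_compat_r; [apply Rlt_le, Rinv_0_lt_compat; lra | exact HqN].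
    + apply Rmult_le_compat_l; [exact HB | apply Rinv_le_contravar; assumption].
  - apply Rmult_le_compat_l; [apply Rlt_le, Rdiv_lt_0_compat; lra | exact HnuN].
Qed.

Variables (g : nat -> R) (a2 C2 : R).
Hypothesis Ha2 : 0 < a2.
Hypothesis HdTV : eventually (fun N => ex_series (fun n => Rabs (gN lam N n - g n)) /\
                    Series (fun n => Rabs (gN lam N n - g n)) <= C2 * Rpower (INR N) (- a2)).

Lemma g_tail_moment_le (K L : R) (P : nat) :
  0 < K -> 0 < L -> tail_moment K g P <= tail_bound K L.
Proof.
  intros HK HL. revert P. apply tail_moment_le_of_approx. intros e He.
  destruct (filter_ex _ (filter_and _ _ (filter_and _ _ gN_tail_moment_eventually_le HdTV)
                                        (eventually_mul_Rpower_INR_opp_le C2 a2 e Ha2 He)))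
    as [N [[HgN [Hex Hser]] Hsmall]].
  exists (gN lam N). repeat split; auto. lra.
Qed.

Lemma split_bound_le (N : nat) (alpha : R) :
  (1 <= N)%nat -> alpha <= a2 / 4 -> alpha <= (q - 2) * a2 / 4 ->
  Rpower (INR N) (a2 / 2) * (C2 * Rpower (INR N) (- a2))
    + 2 * tail_bound (Rpower (INR N) (a2 / 2)) (Rpower (INR N) (a2 / 4))
  <= (Rabs C2 + 2 * (B / mu_lo + 2 * nu_hi)) * Rpower (INR N) (- alpha).
Proof.
  intros HN H1 H2.
  assert (HN1 : 1 <= INR N) by (apply (le_INR 1); exact HN).
  destruct (Rpower_split_scales_le (INR N) a2 q alpha HN1 Ha2 H1 H2) as [E1 [E2 E3]].
  set (K := Rpower (INR N) (a2 / 2)) in *. set (L := Rpower (INR N) (a2 / 4)) in *.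
  set (r := Rpower (INR N) (- alpha)) in *.
  assert (T1 : K * (C2 * Rpower (INR N) (- a2)) <= Rabs C2 * r).
  { rewrite Rmult_comm, Rmult_assoc.
    assert (0 <= Rpower (INR N) (- a2) * K) by (apply Rlt_le, Rmult_lt_0_compat; apply exp_pos).
    apply Rle_trans with (Rabs C2 * (Rpower (INR N) (- a2) * K)).
    - apply Rmult_le_compat_r; [assumption | apply Rle_abs].
    - apply Rmult_le_compat_l; [apply Rabs_pos | lra]. }
  assert (T2 : Rpower L (2 - q) * (B / mu_lo) <= r * (B / mu_lo)).
  { apply Rmult_le_compat_r; [|exact E2].
    apply Rmult_le_pos; [exact HB | apply Rlt_le, Rinv_0_lt_compat, Hmu_lo]. }
  assert (T3 : (L + 1) / K * nu_hi <= 2 * r * nu_hi) by (apply Rmult_le_compat_r; assumption).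
  unfold tail_bound. lra.
Qed.

Lemma weighted_gN_rate :
  exists alpha C, 0 < alpha /\
    eventually (fun N => ex_series (fun n => INR n * Rabs (gN lam N n - g n)) /\
      Series (fun n => INR n * Rabs (gN lam N n - g n)) <= C * Rpower (INR N) (- alpha)).
Proof.
  set (alpha := Rmin (a2 / 4) ((q - 2) * a2 / 4)).
  exists alpha, (Rabs C2 + 2 * (B / mu_lo + 2 * nu_hi)).
  split; [apply Rmin_pos; nra|].
  apply (filter_imp (fun N => (1 <= N)%nat /\
    (forall K L P, 0 < K -> 0 < L -> tail_moment K (gN lam N) P <= tail_bound K L) /\
    ex_series (fun n => Rabs (gN lam N n - g n)) /\
    Series (fun n => Rabs (gN lam N n - g n)) <= C2 * Rpower (INR N) (- a2))).
  2: { apply filter_and; [exists 1%nat; auto|].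
       apply filter_and; [exact gN_tail_moment_eventually_le | exact HdTV]. }
  intros N [HN [HgN [Hex Hser]]].
  assert (HK : 0 < Rpower (INR N) (a2 / 2)) by apply exp_pos.
  assert (HL : 0 < Rpower (INR N) (a2 / 4)) by apply exp_pos.
  destruct (weighted_abs_sub_Series_le (gN lam N) g _ _ _ (Rlt_le _ _ HK) Hex Hser
              (fun P => HgN _ _ P HK HL) (fun P => g_tail_moment_le _ _ P HK HL)) as [Hex' Hs'].
  split; [exact Hex'|].
  eapply Rle_trans; [exact Hs'|].
  apply split_bound_le; [exact HN | apply Rmin_l | apply Rmin_r].
Qed.

End WeightedRate.

Theorem lemmaD6 (lam : nat -> nat -> R)
  (Hpos : forall N i : nat, (i < N)%nat -> 0 < lam N i)
  (mu nu a1 : R) (HC1 : cond_C1 lam mu nu a1)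
  (f g : nat -> R) (a2 : R) (HC2 : cond_C2 lam f g a2)
  (HC3 : cond_C3 lam) :
  exists alpha : R, 0 < alpha /\
    exists C : R, exists N0 : nat, forall N : nat, (N0 <= N)%nat ->
      ex_series (fun n => INR n * Rabs (gN lam N n - g n)) /\
      Series (fun n => INR n * Rabs (gN lam N n - g n)) <= C * Rpower (INR N) (- alpha).
Proof.
  pose proof (cond_C1_eventually _ _ _ _ HC1) as Hmunu.
  destruct HC1 as [Hmu [Hnu _]].
  destruct HC2 as [Ha2 [_ HdTV]].
  destruct (dTV_bigO_eventually _ _ _ HdTV) as [C2 HgN].
  destruct (cond_C3_moment_bound lam HC3) as [q [B [Hq [HB Hmoment]]]].
  destruct (weighted_gN_rate lam Hpos (mu / 2) (nu + 1) q B ltac:(lra) ltac:(lra) Hq HB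
              Hmunu Hmoment g a2 C2 Ha2 HgN) as [alpha [C [Halpha Hrate]]].
  exists alpha. split; [exact Halpha|]. exists C. exact Hrate.
Qed.
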